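(* Consider the binary-symmetric parallel-relay (BSPR) network with $K\ge 1$ relays. Its capacity satisfies $C \leq R_\textnormal{ub}$, where \[ R_\textnormal{ub} = \min \left\{ \max_{p(u)} I(U;\bar{V}),\; K - \sum_{i=1}^K H(p_{i,d}) \right\}, \] where $\bar V=(V_1,\dots,V_K)$ with $V_i=U\oplus Z_i$ (single-letter), the $Z_i$ independent of each other and of $U$, $Z_i\sim\mathrm{Bernoulli}(p_{s,i})$, and the maximum is over distributions of $U\in\{0,1\}$.
   Context: BSPR network with $K$ relays: a source, relays $1,\dots,K$, and a destination. At each network use $t$, the source sends $U[t]\in\{0,1\}$; relay $i$ receives $V_i[t]=U[t]\oplus Z_i[t]$ with $\Pr\{Z_i=1\}=p_{s,i}$, $0\le p_{s,i}\le 1/2$; relay $i$ sends $X_i[t]\in\{0,1\}$ and the destination receives $Y_i[t]=X_i[t]\oplus E_i[t]$ with $\Pr\{E_i=1\}=p_{i,d}$, $0\le p_{i,d}\le 1/2$ ($\oplus$ is addition mod 2). All $Z_i,E_i$ are mutually independent and i.i.d. over network uses. An $(M,n)$ code consists of a message $W$ uniform on $\{0,\dots,M-1\}$, a source encoder $(U[1],\dots,U[n])=f_S(W)$, relay encoders $X_i[t]=f_{i,t}(V_i[1],\dots,V_i[t-1])$ for $t=1,\dots,n$, and a decoder $\hat W=g(\boldsymbol Y_1,\dots,\boldsymbol Y_K)$ where $\boldsymbol Y_i=(Y_i[1],\dots,Y_i[n])$. Its rate is $(\log_2 M)/n$ and its average error probability is $P_e=\frac1M\sum_w\Pr\{\hat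 W\ne w\mid W=w\}$. A rate $R$ is achievable if for every $\epsilon>0$ there exists, for all sufficiently large $n$, a $(2^{nR},n)$ code with $P_e\le\epsilon$; the capacity $C$ is the supremum of achievable rates. $H(p)=-p\log_2 p-(1-p)\log_2(1-p)$ with $H(0)=0$. *)

From HB Require Import structures.
From mathcomp Require Import all_boot all_order all_algebra.
From mathcomp Require Import all_classical all_reals all_analysis.
Set Implicit Arguments. Unset Strict Implicit. Unset Printing Implicit Defensive.
Import Order.TTheory GRing.Theory Num.Theory.
Local Open Scope ring_scope.
Local Open Scope classical_set_scope.

Section BSPR.
Variable R : realType.

Definition log2 (x : R) : R := ln x / ln 2.

Definition xlog2 (x : R) : R := if x == 0 then 0 else x * log2 x.

Definition Hb (p : R) : R := - xlog2 p - xlog2 (1 - p).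

Definition bern (p : R) (b : bool) : R := if b then p else 1 - p.

(* U ~ Bernoulli(q), V_i = U xor Z_i, Z_i ~ Bernoulli(ps i) independent. *)
Definition jointUV (K : nat) (ps : 'I_K -> R) (q : R) (u : bool)
  (v : {ffun 'I_K -> bool}) : R :=
  bern q u * \prod_(i < K) bern (ps i) (addb u (v i)).

Definition margV (K : nat) (ps : 'I_K -> R) (q : R) (v : {ffun 'I_K -> bool}) : R :=
  \sum_(u : bool) jointUV ps q u v.

Definition mutual_info_UV (K : nat) (ps : 'I_K -> R) (q : R) : R :=
  \sum_(u : bool) \sum_(v : {ffun 'I_K -> bool})
    (if jointUV ps q u v == 0 then 0
     else jointUV ps q u v *
          log2 (jointUV ps q u v / (bern q u * margV ps q v))).

(* R_ub = min { max_{p(u)} I(U; Vbar), K - sum_i H(p_{i,d}) } ;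
   the maximum over distributions of U in {0,1}, i.e. over q in [0,1],
   is written as a supremum (it is attained). *)
Definition Rub (K : nat) (ps pd : 'I_K -> R) : R :=
  Num.min (sup [set x | exists2 q : R, 0 <= q <= 1 & x = mutual_info_UV ps q])
          (K%:R - \sum_(i < K) Hb (pd i)).

(* network-use index t : 'I_n (t = 0 is the first use) *)
Definition noise (K n : nat) := {ffun 'I_K * 'I_n -> bool}.

(* An (M,n) code: source encoder, relay encoders, decoder.
   relay i t is applied to the received sequence truncated to positions < t,
   so X_i[t] depends only on V_i[1..t-1] (strict causality). *)
Record code (K M n : nat) := Code {
  src_enc : 'I_M -> 'I_n -> bool;
  relay_enc : 'I_K -> 'I_n -> {ffun 'I_n -> bool} -> bool;
  decoder : noise K n -> 'I_M
}.

Definition trunc (n : nat) (t : 'I_n) (v : {ffun 'I_n -> bool}) : {ffun 'I_n -> bool} :=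
  [ffun s : 'I_n => if (s < t)%N then v s else false].

Definition relay_in K M n (c : code K M n) (w : 'I_M) (z : noise K n) (i : 'I_K)
  : {ffun 'I_n -> bool} :=
  [ffun t : 'I_n => addb (src_enc c w t) (z (i, t))].

Definition dest_out K M n (c : code K M n) (w : 'I_M) (z e : noise K n) : noise K n :=
  [ffun it : 'I_K * 'I_n =>
     addb (relay_enc c it.1 it.2 (trunc it.2 (relay_in c w z it.1))) (e it)].

Definition noise_prob K n (p : 'I_K -> R) (z : noise K n) : R :=
  \prod_(it : 'I_K * 'I_n) bern (p it.1) (z it).

Definition err_prob K M n (ps pd : 'I_K -> R) (c : code K M n) : R :=
  M%:R^-1 * \sum_(w < M) \sum_(z : noise K n) \sum_(e : noise K n)
     noise_prob ps z * noise_prob pd e * (decoder c (dest_out c w z e) != w)%:R.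

Definition achievable (K : nat) (ps pd : 'I_K -> R) (rate : R) : Prop :=
  forall eps : R, 0 < eps ->
  exists N : nat, forall n : nat, (N <= n)%N ->
  exists (M : nat) (c : code K M n),
    (2 : R) `^ (n%:R * rate) <= M%:R /\ err_prob ps pd c <= eps.

Definition capacity (K : nat) (ps pd : 'I_K -> R) : R :=
  sup [set r | achievable ps pd r].

End BSPR.

From Pilot Require Import Defs.
From HB Require Import structures.
From mathcomp Require Import all_boot all_order all_algebra.
From mathcomp Require Import all_classical all_reals all_analysis.
From mathcomp Require Import ring lra.
Import Order.TTheory GRing.Theory Num.Theory.
Local Open Scope ring_scope.

(* Both terms are cut-set bounds derived from one Fano-type inequality: for any
   code, (1 - P_e) log M - 1 is at most the average over messages w of
   D(P_w || Q), where P_w is the law, under message w, of any observation from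
   which the decoder output can be computed, and Q is any reference law.
   Around the destination, the observation is the relay noise Z together with
   Y, and Q makes Y uniform and independent of Z; the divergence is then
   n (K - sum_i H(p_{i,d})) whatever the relays do.  Around the source, the
   observation is the relay-destination noise E together with all the relay
   inputs V[1..n]; with Q the product of the output marginals under the
   empirical input frequencies, the divergence is sum_t I(U_t; V_t), at most n
   times the maximal single-letter mutual information.  Letting P_e -> 0 for
   codes of rate R then forces R below both bounds. *)

Set Implicit Arguments.
Unset Strict Implicit.
Unset Printing Implicit Defensive.

Section KLTerm.
Variable R : realType.

Definition kl_term (x y : R) : R := if x == 0 then 0 else x * log2 (x / y).

Lemma ln2_gt0 : 0 < ln (2 : R).
Proof. by apply: ln_gt0; lra. Qed.

Lemma ln_le_sub1 (y : R) : 0 < y -> ln y <= y - 1.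
Proof.
move=> y0; have := @le_ln1Dx R (y - 1); rewrite addrCA subrr addr0; apply; lra.
Qed.

Lemma kl_termZ (r x y : R) : 0 <= r -> kl_term (r * x) (r * y) = r * kl_term x y.
Proof.
move=> r0; rewrite /kl_term.
have [->|rn0] := eqVneq r 0; first by rewrite !mul0r eqxx.
rewrite mulf_eq0 (negbTE rn0) /=.
case: eqP => _; first by rewrite mulr0.
have -> : r * x / (r * y) = x / y by rewrite invfM mulrACA divff // mul1r.
by rewrite mulrA.
Qed.

(* The tangent line of [ln] at [c]: [ln t <= ln c + t / c - 1] with [t = y / x]. *)
Lemma kl_term_ge_tangent (x y c : R) : 0 <= x -> 0 <= y -> (x != 0 -> 0 < y) ->
  0 < c -> (x * (1 - ln c) - y / c) / ln 2 <= kl_term x y.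
Proof.
move=> x0 y0 hxy c0; rewrite /kl_term /log2.
have l2 := ln2_gt0.
case: eqP => [->|/eqP xn0].
  rewrite mul0r add0r ler_pdivrMr // mul0r oppr_le0 divr_ge0 //; exact: ltW.
have yp := hxy xn0.
have xp : 0 < x by rewrite lt_def xn0 x0.
rewrite mulrA ler_pM2r ?invr_gt0 //.
have hp : 0 < y / (c * x) by rewrite divr_gt0 // mulr_gt0.
have := ln_le_sub1 hp.
rewrite ln_div ?posrE ?mulr_gt0 // lnM ?posrE // ln_div ?posrE // => ln_le.
have : x * (ln y - (ln c + ln x)) <= x * (y / (c * x) - 1) by rewrite ler_pM2l.
have -> : x * (y / (c * x) - 1) = y / c - x by field; rewrite !gt_eqF.
lra.
Qed.

(* The tangent point is [c = 2 / m] where the guess is right ([b]) and [c = 2]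
   elsewhere; summed over messages this yields Fano's inequality. *)
Lemma kl_term_ge_guess (m : R) (b : bool) (x y : R) :
  0 < m -> 0 <= x -> 0 <= y -> (x != 0 -> 0 < y) ->
  (x * (1 - ln 2) + ln m * (x * b%:R) - y * (b%:R * (m / 2) + 2^-1)) / ln 2
  <= kl_term x y.
Proof.
move=> m0 x0 y0 hxy; have l2 := ln2_gt0.
case: b.
- have c0 : 0 < 2 / m by rewrite divr_gt0.
  apply: (le_trans _ (kl_term_ge_tangent x0 y0 hxy c0)).
  rewrite ler_pM2r ?invr_gt0 // ln_div ?posrE // invf_div mulr1 mul1r mulrDr.
  have : 0 <= y * 2^-1 by rewrite mulr_ge0 // invr_ge0.
  lra.
- have c0 : (0 : R) < 2 by [].
  apply: (le_trans _ (kl_term_ge_tangent x0 y0 hxy c0)).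
  rewrite ler_pM2r ?invr_gt0 // !mul0r !mulr0 add0r addr0; lra.
Qed.

End KLTerm.

Section Fano.
Variable R : realType.

Lemma sumr_indicator (O : finType) (x : O) (F : O -> R) :
  \sum_o F o * (x == o)%:R = F x.
Proof.
rewrite (bigD1 x) //= eqxx mulr1 big1 ?addr0 // => o /negbTE.
by rewrite eq_sym => ->; rewrite mulr0.
Qed.

Lemma sum_pushforward (O W : finType) (rho : W -> R) (Phi : W -> O) (P : O -> R) :
  (forall o, P o = \sum_om rho om * (Phi om == o)%:R) ->
  forall h : O -> R, \sum_o P o * h o = \sum_om rho om * h (Phi om).
Proof.
move=> hP h; under eq_bigr do rewrite hP big_distrl /=.
rewrite exchange_big /=; apply: eq_bigr => om _.
under eq_bigr do rewrite -mulrA (mulrC _ (h _)) mulrA.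
by rewrite sumr_indicator.
Qed.

Lemma sum_guess_weight (M : nat) (O : finType) (g : O -> 'I_M) (Q : O -> R) :
  \sum_(w < M) \sum_o Q o * ((g o == w)%:R * (M%:R / 2) + 2^-1) =
  \sum_o Q o * M%:R.
Proof.
rewrite exchange_big /=; apply: eq_bigr => o _.
rewrite -big_distrr /=; congr (_ * _).
rewrite big_split /= sumr_const card_ord -big_distrl /=.
have -> : \sum_(w < M) ((g o == w)%:R : R) = 1.
  transitivity (\sum_(w < M) (1 : R) * (g o == w)%:R).
    by apply: eq_bigr => w _; rewrite mul1r.
  exact: sumr_indicator.
by rewrite mul1r -mulr_natr; field.
Qed.

(* Fano's inequality in divergence form: [P w] is the law of an observation
   [Phi w] of the noise [rho] when [w] is sent, [g] decodes it, and [Q] is an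
   arbitrary reference sub-probability. *)
Lemma fano_kl_bound (M : nat) (O W : finType) (rho : W -> R)
    (Phi : 'I_M -> W -> O) (g : O -> 'I_M) (Q : O -> R) (P : 'I_M -> O -> R) :
  (0 < M)%N ->
  (forall om, 0 <= rho om) -> \sum_om rho om = 1 ->
  (forall o, 0 <= Q o) -> \sum_o Q o <= 1 ->
  (forall w o, P w o = \sum_om rho om * (Phi w om == o)%:R) ->
  (forall w o, P w o != 0 -> 0 < Q o) ->
  (M%:R^-1 * \sum_w \sum_om rho om * (g (Phi w om) == w)%:R) * log2 M%:R - 1
   <= M%:R^-1 * \sum_w \sum_o kl_term (P w o) (Q o).
Proof.
move=> M0 rho0 rho1 Q0 Q1 hP hPQ.
have l2 : 0 < ln (2 : R) := ln2_gt0 R.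
have Mp : (0 : R) < M%:R by rewrite ltr0n.
have P0 w o : 0 <= P w o.
  by rewrite hP; apply: sumr_ge0 => om _; apply: mulr_ge0.
have sumP w : \sum_o P w o = 1.
  transitivity (\sum_o P w o * 1); first by apply: eq_bigr => o _; rewrite mulr1.
  by rewrite (sum_pushforward (hP w)) -[RHS]rho1; apply: eq_bigr => om _; rewrite mulr1.
pose L w o := (P w o * (1 - ln 2) + ln M%:R * (P w o * (g o == w)%:R)
     - Q o * ((g o == w)%:R * (M%:R / 2) + 2^-1)) / ln 2.
have sumL w : \sum_o L w o =
    ((1 - ln 2) + ln M%:R * (\sum_om rho om * (g (Phi w om) == w)%:R)
     - \sum_o Q o * ((g o == w)%:R * (M%:R / 2) + 2^-1)) / ln 2.
  rewrite /L -big_distrl /=; congr (_ / _).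
  rewrite big_split /= big_split /= -big_distrr /= -big_distrl /= sumP mul1r.
  by rewrite (sum_pushforward (hP w) (fun o => (g o == w)%:R)) sumrN.
have le_kl : M%:R^-1 * \sum_w \sum_o L w o
             <= M%:R^-1 * \sum_w \sum_o kl_term (P w o) (Q o).
  rewrite ler_pM2l ?invr_gt0 //; apply: ler_sum => w _; apply: ler_sum => o _.
  exact: (kl_term_ge_guess _ Mp (P0 w o) (Q0 o) (hPQ w o)).
apply: (le_trans _ le_kl).
rewrite (eq_bigr _ (fun w _ => sumL w)) -big_distrl /=.
rewrite big_split /= sumrN big_split /= sumr_const card_ord -big_distrr /=.
rewrite sum_guess_weight -big_distrl /=.
set S := \sum_w _; set T := \sum_o Q o.
have hT : M%:R^-1 * (T * M%:R) <= 1.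
  by rewrite mulrC mulfK ?gt_eqF.
rewrite -subr_ge0 /log2.
have -> : M%:R^-1 * (((1 - ln 2) *+ M + ln M%:R * S - T * M%:R) / ln 2) -
   (M%:R^-1 * S * (ln M%:R / ln 2) - 1) = (1 - M%:R^-1 * (T * M%:R)) / ln 2.
  by rewrite -mulr_natr; field; rewrite !gt_eqF.
by rewrite divr_ge0 ?subr_ge0 // ltW.
Qed.

End Fano.

Section ProductLaws.
Variable R : realType.

Lemma sum_ffun_prod1 (J X : finType) (p : J -> X -> R) :
  (forall j, \sum_x p j x = 1) -> \sum_(f : {ffun J -> X}) \prod_j p j (f j) = 1.
Proof. by move=> h; rewrite -bigA_distr_bigA big1. Qed.

Lemma sum_ffun_prod_marginal (J X : finType) (p : J -> X -> R) (j0 : J) (G : X -> R) :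
  (forall j, \sum_x p j x = 1) ->
  \sum_(f : {ffun J -> X}) (\prod_j p j (f j)) * G (f j0) = \sum_x p j0 x * G x.
Proof.
move=> h.
pose p' j x := if j == j0 then p j x * G x else p j x.
transitivity (\sum_(f : {ffun J -> X}) \prod_j p' j (f j)).
  apply: eq_bigr => f _.
  rewrite (bigD1 j0) //= [in RHS](bigD1 j0) //= /p' eqxx.
  by rewrite mulrAC; congr (_ * _); apply: eq_bigr => j /negbTE ->.
rewrite -bigA_distr_bigA (bigD1 j0) //= [X in _ * X]big1 ?mulr1.
  by apply: eq_bigr => x _; rewrite /p' eqxx.
by move=> j /negbTE hj; under eq_bigr do rewrite /p' hj; apply: h.
Qed.

Lemma sum_ffun_prod_sum (J X : finType) (p : J -> X -> R) (G : J -> X -> R) :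
  (forall j, \sum_x p j x = 1) ->
  \sum_(f : {ffun J -> X}) (\prod_j p j (f j)) * \sum_j G j (f j)
   = \sum_j \sum_x p j x * G j x.
Proof.
move=> h; under eq_bigr do rewrite big_distrr /=.
rewrite exchange_big /=; apply: eq_bigr => j _.
exact: sum_ffun_prod_marginal.
Qed.

Lemma ln_prod (I : finType) (a : I -> R) :
  (forall i, 0 < a i) -> ln (\prod_i a i) = \sum_i ln (a i).
Proof.
move=> h.
suff [] : 0 < \prod_i a i /\ ln (\prod_i a i) = \sum_i ln (a i) by [].
apply: (big_rec2 (fun x y => 0 < x /\ ln x = y)); first by rewrite ln1.
move=> i y x _ [xp <-]; split; first by rewrite mulr_gt0.
by rewrite lnM ?posrE.
Qed.

Lemma kl_term_prod (J X : finType) (p m : J -> X -> R) :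
  (forall j x, 0 <= p j x) -> (forall j, \sum_x p j x = 1) ->
  (forall j x, p j x != 0 -> 0 < m j x) ->
  \sum_(f : {ffun J -> X}) kl_term (\prod_j p j (f j)) (\prod_j m j (f j))
   = \sum_j \sum_x kl_term (p j x) (m j x).
Proof.
move=> p0 p1 pm.
pose G j x := if p j x == 0 then 0 else log2 (p j x / m j x).
transitivity (\sum_(f : {ffun J -> X}) (\prod_j p j (f j)) * \sum_j G j (f j)).
  apply: eq_bigr => f _; rewrite /kl_term.
  case: eqP => [->|/eqP hne]; first by rewrite mul0r.
  congr (_ * _).
  have nz j : p j (f j) != 0.
    by apply/eqP => hj; move: hne; rewrite (bigD1 j) //= hj mul0r eqxx.
  have pos j : 0 < p j (f j) / m j (f j).
    by rewrite divr_gt0 ?pm // lt_def nz p0.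
  rewrite -prodf_div /log2 ln_prod // big_distrl /=; apply: eq_bigr => j _.
  by rewrite /G (negbTE (nz j)).
rewrite sum_ffun_prod_sum //; apply: eq_bigr => j _; apply: eq_bigr => x _.
by rewrite /G /kl_term; case: eqP => [->|]; rewrite ?mul0r.
Qed.

Lemma sum_pair (A B : finType) (F : A * B -> R) :
  \sum_p F p = \sum_a \sum_b F (a, b).
Proof. by rewrite pair_bigA; apply: eq_bigr => -[]. Qed.

Lemma prod_pair (A B : finType) (F : A * B -> R) :
  \prod_p F p = \prod_a \prod_b F (a, b).
Proof. by rewrite pair_bigA; apply: eq_bigr => -[]. Qed.

End ProductLaws.

Section Bernoulli.
Variable R : realType.

Lemma bern_ge0 (p : R) b : 0 <= p <= 1 -> 0 <= bern p b.
Proof. by case/andP=> h1 h2; case: b => //=; rewrite subr_ge0. Qed.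

Lemma bern_sum (p : R) : \sum_b bern p b = 1.
Proof. by rewrite big_bool /=; ring. Qed.

Lemma bern_sum_addb (p : R) u : \sum_b bern p (addb u b) = 1.
Proof. by rewrite big_bool; case: u => /=; ring. Qed.

Lemma noise_prob_ge0 K n (p : 'I_K -> R) z :
  (forall i, 0 <= p i <= 1) -> 0 <= noise_prob (n:=n) p z.
Proof. by move=> h; apply: prodr_ge0 => it _; apply: bern_ge0. Qed.

Lemma noise_prob_sum K n (p : 'I_K -> R) :
  \sum_(z : noise K n) noise_prob p z = 1.
Proof.
by apply: (sum_ffun_prod1 (p := fun it b => bern (p it.1) b)) => it; apply: bern_sum.
Qed.

End Bernoulli.

Section DestCut.
Variable R : realType.

Lemma kl_term_half (x : R) : 0 <= x -> kl_term x 2^-1 = xlog2 x + x.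
Proof.
move=> x0; rewrite /kl_term /xlog2; case: eqP => [->|/eqP hx]; first by rewrite addr0.
have xp : 0 < x by rewrite lt_def hx x0.
have l2 : 0 < ln (2 : R) := ln2_gt0 R.
by rewrite invrK /log2 lnM ?posrE //; field; rewrite gt_eqF.
Qed.

Lemma kl_bern_half (p : R) : 0 <= p <= 1 -> \sum_b kl_term (bern p b) 2^-1 = 1 - Hb p.
Proof.
move=> hp; have /andP[p0 p1] := hp.
rewrite big_bool /= !kl_term_half ?subr_ge0 //; rewrite /Hb; ring.
Qed.

Variables (K n : nat) (ps pd : 'I_K -> R).
Hypothesis hps : forall i, 0 <= ps i <= 1.
Hypothesis hpd : forall i, 0 <= pd i <= 1.

Definition noise_pair_prob (om : noise K n * noise K n) : R :=
  noise_prob ps om.1 * noise_prob pd om.2.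

Lemma noise_pair_prob_ge0 om : 0 <= noise_pair_prob om.
Proof. by rewrite mulr_ge0 // noise_prob_ge0. Qed.

Lemma noise_pair_prob_sum : \sum_om noise_pair_prob om = 1.
Proof.
rewrite sum_pair.
under eq_bigr do rewrite /noise_pair_prob /= -big_distrr /= noise_prob_sum mulr1.
exact: noise_prob_sum.
Qed.

Lemma kl_noise_uniform : \sum_(e : noise K n) kl_term (noise_prob pd e)
     (\prod_(it : 'I_K * 'I_n) (2^-1 : R)) = n%:R * (K%:R - \sum_i Hb (pd i)).
Proof.
transitivity (\sum_(it : 'I_K * 'I_n) \sum_b kl_term (bern (pd it.1) b) (2^-1 : R)).
  apply: (kl_term_prod (p := fun (it : 'I_K * 'I_n) b => bern (pd it.1) b)
                       (m := fun _ _ => (2^-1 : R))).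
  - by move=> it b; apply: bern_ge0.
  - by move=> it; apply: bern_sum.
  - by move=> it b _; rewrite invr_gt0.
under eq_bigr do rewrite kl_bern_half //.
rewrite sum_pair /=; under eq_bigr do rewrite sumr_const card_ord -mulr_natl.
by rewrite -mulr_sumr sumrB sumr_const card_ord.
Qed.

Definition xorf (T : finType) (a b : {ffun T -> bool}) : {ffun T -> bool} :=
  [ffun i => addb (a i) (b i)].

Lemma xorfK (T : finType) (a b : {ffun T -> bool}) : xorf a (xorf a b) = b.
Proof. by apply/ffunP => i; rewrite !ffunE addKb. Qed.

Variables (M : nat) (c : Defs.code K M n).

Definition relay_out w (z : noise K n) : noise K n :=
  [ffun it => relay_enc c it.1 it.2 (trunc it.2 (relay_in c w z it.1))].

Lemma dest_outE w z e : dest_out c w z e = xorf (relay_out w z) e.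
Proof. by apply/ffunP => it; rewrite !ffunE. Qed.

(* Cut around the destination: reveal the relay noise [Z] together with [Y]; the
   reference law makes [Y] uniform and independent of [Z]. *)
Definition dest_cut_obs (w : 'I_M) (om : noise K n * noise K n) :=
  (om.1, dest_out c w om.1 om.2).

Definition dest_cut_law (w : 'I_M) (o : noise K n * noise K n) : R :=
  noise_prob ps o.1 * noise_prob pd (xorf (relay_out w o.1) o.2).

Definition dest_cut_ref (o : noise K n * noise K n) : R :=
  noise_prob ps o.1 * \prod_(it : 'I_K * 'I_n) (2^-1 : R).

Lemma dest_cut_lawE w o :
  dest_cut_law w o = \sum_om noise_pair_prob om * (dest_cut_obs w om == o)%:R.
Proof.
case: o => z' y; rewrite sum_pair /dest_cut_law /=.
transitivity (\sum_z noise_prob ps z * (z == z')%:R *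
    \sum_e noise_prob pd e * (e == xorf (relay_out w z) y)%:R).
  rewrite (bigD1 z') //= eqxx mulr1 [X in _ + X]big1 ?addr0; last first.
    by move=> z hz; rewrite (negbTE hz) mulr0 mul0r.
  by congr (_ * _); under eq_bigr do rewrite eq_sym; rewrite sumr_indicator.
apply: eq_bigr => z _; rewrite big_distrr /=; apply: eq_bigr => e _.
rewrite /noise_pair_prob /dest_cut_obs /= xpair_eqE.
have -> : (dest_out c w z e == y) = (e == xorf (relay_out w z) y).
  by rewrite dest_outE; apply/eqP/eqP => [<-|->]; rewrite xorfK.
by case: (z == z'); case: (e == _); rewrite /= ?mulr0 ?mulr1 ?mul0r.
Qed.

Lemma half_prod_gt0 : 0 < \prod_(it : 'I_K * 'I_n) (2^-1 : R).
Proof. by apply: prodr_gt0 => it _; rewrite invr_gt0. Qed.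

Lemma dest_cut_ref_ge0 o : 0 <= dest_cut_ref o.
Proof. by rewrite mulr_ge0 ?noise_prob_ge0 // ltW // half_prod_gt0. Qed.

Lemma dest_cut_ref_sum : \sum_o dest_cut_ref o = 1.
Proof.
have unif : \sum_(y : noise K n) \prod_(it : 'I_K * 'I_n) (2^-1 : R) = 1.
  apply: (sum_ffun_prod1 (p := fun (it : 'I_K * 'I_n) (b : bool) => (2^-1 : R))).
  by move=> it; rewrite big_bool /=; field.
rewrite sum_pair.
under eq_bigr do rewrite /dest_cut_ref /= -big_distrr /= unif mulr1.
exact: noise_prob_sum.
Qed.

Lemma dest_cut_law_supp w o : dest_cut_law w o != 0 -> 0 < dest_cut_ref o.
Proof.
rewrite /dest_cut_law /dest_cut_ref mulf_eq0 negb_or => /andP[h _].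
by rewrite mulr_gt0 ?half_prod_gt0 // lt_def h noise_prob_ge0.
Qed.

Lemma dest_cut_kl w : \sum_o kl_term (dest_cut_law w o) (dest_cut_ref o) =
  n%:R * (K%:R - \sum_i Hb (pd i)).
Proof.
rewrite sum_pair.
under eq_bigr => z _ do under eq_bigr => y _ do
  rewrite /dest_cut_law /dest_cut_ref /= kl_termZ ?noise_prob_ge0 //.
under eq_bigr => z _ do rewrite -big_distrr /=
  [X in _ * X](reindex_inj (can_inj (xorfK (relay_out w z)))) /=.
under eq_bigr => z _ do under eq_bigr => y _ do rewrite xorfK.
under eq_bigr do rewrite kl_noise_uniform.
by rewrite -big_distrl /= noise_prob_sum mul1r.
Qed.

End DestCut.

Section MutualInfo.
Variables (R : realType) (K : nat) (ps : 'I_K -> R).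
Hypothesis hps : forall i, 0 <= ps i <= 1.

Definition relay_channel (u : bool) (s : {ffun 'I_K -> bool}) : R :=
  \prod_i bern (ps i) (addb u (s i)).

Lemma relay_channel_ge0 u s : 0 <= relay_channel u s.
Proof. by apply: prodr_ge0 => i _; apply: bern_ge0. Qed.

Lemma relay_channel_sum u : \sum_s relay_channel u s = 1.
Proof.
apply: (sum_ffun_prod1 (p := fun i x => bern (ps i) (addb u x))) => i.
exact: bern_sum_addb.
Qed.

Lemma margV_ge0 q s : 0 <= q <= 1 -> 0 <= margV ps q s.
Proof.
move=> hq; apply: sumr_ge0 => u _.
by rewrite mulr_ge0 ?(bern_ge0 _ hq) ?relay_channel_ge0.
Qed.

Lemma margV_sum q : \sum_s margV ps q s = 1.
Proof.
rewrite /margV exchange_big /=.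
under eq_bigr do rewrite /jointUV -big_distrr /= relay_channel_sum mulr1.
exact: bern_sum.
Qed.

(* A crude bound, from [ln t <= t] and [p(u) p(v|u) <= p(v)]; it only serves to
   make the supremum over input laws finite. *)
Lemma mutual_info_term_le (q : R) u s : 0 <= q <= 1 ->
  (if jointUV ps q u s == 0 then 0
   else jointUV ps q u s * log2 (jointUV ps q u s / (bern q u * margV ps q s)))
  <= relay_channel u s / ln 2.
Proof.
move=> hq.
have l2 : 0 < ln (2 : R) := ln2_gt0 R.
have a0 := bern_ge0 u hq.
have W0 := relay_channel_ge0 u s.
have hm : bern q u * relay_channel u s <= margV ps q s.
  rewrite /margV (bigD1 u) //= ler_wpDr //.
  by apply: sumr_ge0 => u' _; rewrite mulr_ge0 ?(bern_ge0 _ hq) ?relay_channel_ge0.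
rewrite /jointUV -/(relay_channel u s).
case: eqP => [_|/eqP hne]; first by rewrite divr_ge0 // ltW.
have [an0 Wn0] : bern q u != 0 /\ relay_channel u s != 0.
  by move: hne; rewrite mulf_eq0 negb_or => /andP.
set a := bern q u in a0 an0 hm *; set W := relay_channel u s in W0 Wn0 hm *.
set m := margV ps q s in hm *.
have ap : 0 < a by rewrite lt_def an0 a0.
have Wp : 0 < W by rewrite lt_def Wn0 W0.
have mp : 0 < m by apply: lt_le_trans hm; rewrite mulr_gt0.
have xp : 0 < a * W / (a * m) by rewrite divr_gt0 ?mulr_gt0.
have hx : ln (a * W / (a * m)) <= a * W / (a * m).
  by apply: (le_trans (ln_le_sub1 xp)); rewrite lerBlDr lerDl.
rewrite /log2 mulrA ler_pM2r ?invr_gt0 //.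
apply: (@le_trans _ _ (a * W * (a * W / (a * m)))); first by rewrite ler_pM2l ?mulr_gt0.
have -> : a * W * (a * W / (a * m)) = W * (a * W / m) by field; rewrite !gt_eqF.
by rewrite -[leRHS]mulr1 ler_pM2l // ler_pdivrMr // mul1r.
Qed.

Lemma mutual_info_UV_le (q : R) : 0 <= q <= 1 -> mutual_info_UV ps q <= 2 / ln 2.
Proof.
move=> hq; rewrite /mutual_info_UV.
apply: (@le_trans _ _ (\sum_(u : bool) \sum_s relay_channel u s / ln 2)).
  by apply: ler_sum => u _; apply: ler_sum => s _; apply: mutual_info_term_le.
under eq_bigr do rewrite -big_distrl /= relay_channel_sum.
by rewrite big_bool /= -mulrDl.
Qed.

Definition mutual_info_range : set R :=
  [set x | exists2 q : R, 0 <= q <= 1 & x = mutual_info_UV ps q].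

Lemma mutual_info_range_has_sup : has_sup mutual_info_range.
Proof.
split; first by exists (mutual_info_UV ps 0); exists 0 => //; rewrite lexx ler01.
by exists (2 / ln 2) => x [q hq ->]; apply: mutual_info_UV_le.
Qed.

Lemma mutual_info_UV_le_sup q :
  0 <= q <= 1 -> mutual_info_UV ps q <= sup mutual_info_range.
Proof. by move=> hq; apply: (sup_upper_bound mutual_info_range_has_sup); exists q. Qed.

End MutualInfo.

Section Mean.
Variable R : realType.
Variables (M : nat) (b : 'I_M -> bool).
Hypothesis M0 : (0 < M)%N.

Definition mean_bit : R := M%:R^-1 * \sum_w (b w)%:R.

Lemma bern_mean_bit u : bern mean_bit u = M%:R^-1 * \sum_w ((b w == u)%:R : R).
Proof.
have Mn0 : (M%:R : R) != 0 by rewrite pnatr_eq0 -lt0n.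
case: u => /=.
  by congr (_ * _); apply: eq_bigr => w _; rewrite eqb_id.
have -> : \sum_w ((b w == false)%:R : R) = \sum_w (1 - (b w)%:R).
  by apply: eq_bigr => w _; case: (b w); rewrite /= ?subrr ?subr0.
by rewrite sumrB sumr_const card_ord mulrBr -mulr_natr mul1r mulVf.
Qed.

Lemma mean_bool (F : bool -> R) :
  M%:R^-1 * \sum_w F (b w) = \sum_u bern mean_bit u * F u.
Proof.
transitivity (\sum_u (M%:R^-1 * \sum_w ((b w == u)%:R : R)) * F u); last first.
  by apply: eq_bigr => u _; rewrite bern_mean_bit.
under [RHS]eq_bigr do rewrite -mulrA mulr_suml.
rewrite -mulr_sumr exchange_big /=; congr (_ * _); apply: eq_bigr => w _.
by under eq_bigr do rewrite mulrC; rewrite sumr_indicator.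
Qed.

Lemma mean_bit_ge0 : 0 <= mean_bit.
Proof. by rewrite mulr_ge0 ?invr_ge0 ?ler0n // sumr_ge0 // => w _; rewrite ler0n. Qed.

Lemma mean_bit_le1 : mean_bit <= 1.
Proof.
rewrite -subr_ge0; have := bern_mean_bit false; rewrite /= => ->.
by rewrite mulr_ge0 ?invr_ge0 ?ler0n // sumr_ge0 // => w _; rewrite ler0n.
Qed.

Lemma bern_mean_bit_gt0 w : 0 < bern mean_bit (b w).
Proof.
rewrite bern_mean_bit mulr_gt0 ?invr_gt0 ?ltr0n //.
by rewrite (bigD1 w) //= eqxx ltr_pwDl // sumr_ge0 // => i _; exact: ler0n.
Qed.

End Mean.

Section SourceCut.
Variables (R : realType) (K M n : nat) (c : Defs.code K M n) (ps pd : 'I_K -> R).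
Hypothesis hps : forall i, 0 <= ps i <= 1.
Hypothesis hpd : forall i, 0 <= pd i <= 1.
Hypothesis M0 : (0 < M)%N.

Local Notation relay_word := {ffun 'I_n -> {ffun 'I_K -> bool}}.

Definition input_freq (t : 'I_n) : R := @mean_bit R M (fun w => src_enc c w t).

Definition output_marg (t : 'I_n) (s : {ffun 'I_K -> bool}) : R :=
  margV ps (input_freq t) s.

Lemma input_freq_01 t : 0 <= input_freq t <= 1.
Proof. by rewrite mean_bit_ge0 mean_bit_le1. Qed.

Definition relay_inputs (w : 'I_M) (z : noise K n) : relay_word :=
  [ffun t => [ffun i => addb (src_enc c w t) (z (i, t))]].

Definition relay_noise (w : 'I_M) (v : relay_word) : noise K n :=
  [ffun it => addb (src_enc c w it.2) (v it.2 it.1)].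

Lemma relay_inputs_eq w z v : (relay_inputs w z == v) = (z == relay_noise w v).
Proof.
apply/eqP/eqP => [<-|->].
  by apply/ffunP => -[i t]; rewrite !ffunE addKb.
by apply/ffunP => t; apply/ffunP => i; rewrite !ffunE addKb.
Qed.

Lemma noise_prob_relay_noise w v :
  noise_prob ps (relay_noise w v) = \prod_t relay_channel ps (src_enc c w t) (v t).
Proof.
rewrite /noise_prob prod_pair exchange_big /=; apply: eq_bigr => t _.
by apply: eq_bigr => i _; rewrite ffunE.
Qed.

(* Cut around the source: reveal the relay-destination noise [E] together with
   all the relay inputs [V]; the destination output is a function of them since
   the relays see nothing else.  The reference law replaces each [V[t]] by its
   marginal under the empirical input frequency at time [t]. *)
Definition source_cut_obs (w : 'I_M) (om : noise K n * noise K n) :=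
  (om.2, relay_inputs w om.1).

Definition source_cut_dec (o : noise K n * relay_word) :=
  decoder c [ffun it : 'I_K * 'I_n => addb (relay_enc c it.1 it.2
      (trunc it.2 [ffun t => o.2 t it.1])) (o.1 it)].

Definition source_cut_law (w : 'I_M) (o : noise K n * relay_word) : R :=
  noise_prob pd o.1 * \prod_t relay_channel ps (src_enc c w t) (o.2 t).

Definition source_cut_ref (o : noise K n * relay_word) : R :=
  noise_prob pd o.1 * \prod_t output_marg t (o.2 t).

Lemma source_cut_decE w z e :
  source_cut_dec (source_cut_obs w (z, e)) = decoder c (dest_out c w z e).
Proof.
congr (decoder c _); apply/ffunP => it; rewrite !ffunE.
congr (addb (relay_enc c _ _ (trunc _ _)) _).
by apply/ffunP => t; rewrite !ffunE.
Qed.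

Lemma source_cut_lawE w o : source_cut_law w o =
  \sum_om noise_pair_prob ps pd om * (source_cut_obs w om == o)%:R.
Proof.
case: o => e' v; rewrite sum_pair /source_cut_law /= -noise_prob_relay_noise mulrC.
transitivity (\sum_z noise_prob ps z * (z == relay_noise w v)%:R *
    \sum_e noise_prob pd e * (e == e')%:R).
  rewrite (bigD1 (relay_noise w v)) //= eqxx mulr1 [X in _ + X]big1 ?addr0; last first.
    by move=> z hz; rewrite (negbTE hz) mulr0 mul0r.
  by congr (_ * _); under eq_bigr do rewrite eq_sym; rewrite sumr_indicator.
apply: eq_bigr => z _; rewrite big_distrr /=; apply: eq_bigr => e _.
rewrite /noise_pair_prob /source_cut_obs /= xpair_eqE relay_inputs_eq.
by case: (z == _); case: (e == e'); rewrite /= ?mulr0 ?mulr1 ?mul0r.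
Qed.

Lemma output_marg_gt0 w t s :
  relay_channel ps (src_enc c w t) s != 0 -> 0 < output_marg t s.
Proof.
move=> h; rewrite /output_marg /margV (bigD1 (src_enc c w t)) //=.
rewrite ltr_pwDl ?sumr_ge0 // => [|u _]; last first.
  by rewrite mulr_ge0 ?(bern_ge0 _ (input_freq_01 t)) ?relay_channel_ge0.
rewrite mulr_gt0 ?bern_mean_bit_gt0 //.
by rewrite lt_def h relay_channel_ge0.
Qed.

Lemma source_cut_ref_ge0 o : 0 <= source_cut_ref o.
Proof.
rewrite mulr_ge0 ?noise_prob_ge0 // prodr_ge0 // => t _.
exact: margV_ge0 (input_freq_01 t).
Qed.

Lemma source_cut_ref_sum : \sum_o source_cut_ref o = 1.
Proof.
have marg1 : \sum_(v : relay_word) \prod_t output_marg t (v t) = 1.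
  by apply: (sum_ffun_prod1 (p := output_marg)) => t; apply: margV_sum.
rewrite sum_pair.
under eq_bigr do rewrite /source_cut_ref /= -big_distrr /= marg1 mulr1.
exact: noise_prob_sum.
Qed.

Lemma source_cut_law_supp w o : source_cut_law w o != 0 -> 0 < source_cut_ref o.
Proof.
rewrite /source_cut_law /source_cut_ref mulf_eq0 negb_or => /andP[h1 h2].
rewrite mulr_gt0 //; first by rewrite lt_def h1 noise_prob_ge0.
apply: prodr_gt0 => t _; apply: (output_marg_gt0 (w := w)).
by apply/eqP => ht; move: h2; rewrite (bigD1 t) //= ht mul0r eqxx.
Qed.

Lemma source_cut_kl_msg w :
  \sum_o kl_term (source_cut_law w o) (source_cut_ref o) =
  \sum_t \sum_s kl_term (relay_channel ps (src_enc c w t) s) (output_marg t s).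
Proof.
rewrite sum_pair.
under eq_bigr => e _ do under eq_bigr => v _ do
  rewrite /source_cut_law /source_cut_ref /= kl_termZ ?noise_prob_ge0 //.
under eq_bigr do rewrite -big_distrr /=.
transitivity (\sum_(e : noise K n) noise_prob pd e *
   \sum_t \sum_s kl_term (relay_channel ps (src_enc c w t) s) (output_marg t s)).
  apply: eq_bigr => e _; congr (_ * _).
  apply: (kl_term_prod (p := fun t s => relay_channel ps (src_enc c w t) s)).
  - by move=> t s; apply: relay_channel_ge0.
  - by move=> t; apply: relay_channel_sum.
  - by move=> t s; apply: output_marg_gt0.
by rewrite -big_distrl /= noise_prob_sum mul1r.
Qed.

Lemma source_cut_kl :
  M%:R^-1 * \sum_w \sum_o kl_term (source_cut_law w o) (source_cut_ref o) =
  \sum_t mutual_info_UV ps (input_freq t).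
Proof.
under eq_bigr do rewrite source_cut_kl_msg.
rewrite exchange_big /= mulr_sumr; apply: eq_bigr => t _.
rewrite (mean_bool _ M0
  (fun u => \sum_s kl_term (relay_channel ps u s) (output_marg t s))).
rewrite /mutual_info_UV; apply: eq_bigr => u _; rewrite big_distrr /=.
by apply: eq_bigr => s _; rewrite -kl_termZ ?(bern_ge0 _ (input_freq_01 t)).
Qed.

End SourceCut.

Section Converse.
Variables (R : realType) (K : nat) (ps pd : 'I_K -> R).
Hypothesis hps : forall i, 0 <= ps i <= 1.
Hypothesis hpd : forall i, 0 <= pd i <= 1.

Lemma success_probE (M n : nat) (c : Defs.code K M n)
    (G : 'I_M -> noise K n * noise K n -> 'I_M) :
  (0 < M)%N -> (forall w z e, G w (z, e) = decoder c (dest_out c w z e)) ->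
  M%:R^-1 * \sum_w \sum_om noise_pair_prob ps pd om * (G w om == w)%:R =
  1 - err_prob ps pd c.
Proof.
move=> M0 hG.
have Mn0 : (M%:R : R) != 0 by rewrite pnatr_eq0 -lt0n.
rewrite /err_prob.
have -> : \sum_w \sum_om noise_pair_prob ps pd om * (G w om == w)%:R =
    \sum_(w < M) (1 - \sum_(z : noise K n) \sum_(e : noise K n)
     noise_prob ps z * noise_prob pd e * (decoder c (dest_out c w z e) != w)%:R).
  apply: eq_bigr => w _.
  rewrite -[X in X - _](noise_pair_prob_sum n ps pd) !sum_pair -sumrB.
  apply: eq_bigr => z _; rewrite -sumrB; apply: eq_bigr => e _.
  rewrite hG /noise_pair_prob /=.
  by case: (_ == w); rewrite /= ?mulr1 ?mulr0 ?subr0 ?subrr.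
by rewrite sumrB sumr_const card_ord mulrBr -mulr_natr mul1r mulVf.
Qed.

Lemma fano_dest_cut (M n : nat) (c : Defs.code K M n) : (0 < M)%N ->
  (1 - err_prob ps pd c) * log2 M%:R - 1 <= n%:R * (K%:R - \sum_i Hb (pd i)).
Proof.
move=> M0.
have Mn0 : (M%:R : R) != 0 by rewrite pnatr_eq0 -lt0n.
rewrite -(success_probE (G := fun w om => decoder c (dest_cut_obs c w om).2)) //.
have ref_le1 : \sum_(o : noise K n * noise K n) dest_cut_ref ps o <= 1.
  by rewrite dest_cut_ref_sum.
have := fano_kl_bound (fun o => decoder c o.2) M0 (noise_pair_prob_ge0 hps hpd)
  (noise_pair_prob_sum n ps pd) (dest_cut_ref_ge0 hps) ref_le1
  (dest_cut_lawE ps pd c) (dest_cut_law_supp (c := c) hps).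
under [X in _ <= _ * X -> _]eq_bigr do rewrite (dest_cut_kl hps hpd c).
rewrite sumr_const card_ord => h; apply: (le_trans h).
by rewrite -[X in _ * X]mulr_natl mulrA mulVf // mul1r.
Qed.

Lemma fano_source_cut (M n : nat) (c : Defs.code K M n) : (0 < M)%N ->
  (1 - err_prob ps pd c) * log2 M%:R - 1 <=
  n%:R * sup (mutual_info_range ps).
Proof.
move=> M0.
rewrite -(success_probE (G := fun w om => source_cut_dec c (source_cut_obs c w om)) M0);
  last by move=> w z e; apply: source_cut_decE.
have ref_le1 : \sum_o source_cut_ref c ps pd o <= 1 by rewrite source_cut_ref_sum.
have := fano_kl_bound (source_cut_dec c) M0 (noise_pair_prob_ge0 hps hpd)
  (noise_pair_prob_sum n ps pd) (source_cut_ref_ge0 c hps hpd M0) ref_le1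
  (source_cut_lawE c ps pd) (source_cut_law_supp hps hpd M0).
rewrite (source_cut_kl c hps hpd M0) => /le_trans; apply.
have -> : n%:R * sup (mutual_info_range ps) = \sum_(t < n) sup (mutual_info_range ps).
  by rewrite sumr_const card_ord mulr_natl.
by apply: ler_sum => t _; apply: mutual_info_UV_le_sup (input_freq_01 R c M0 t).
Qed.

End Converse.

Section RateLimit.
Variable R : realType.

Lemma le0_of_natmul_le1 (d : R) :
  (forall N : nat, exists2 n : nat, (N <= n)%N & n%:R * d <= 1) -> d <= 0.
Proof.
move=> h; rewrite leNgt; apply/negP => d0.
have [n Nn nd] := h (Num.truncn d^-1).+1.
have : d^-1 < n%:R by apply: (lt_le_trans (truncnS_gt _)); rewrite ler_nat.
rewrite -div1r ltr_pdivrMr //; lra.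
Qed.

Lemma le_of_forall_scaled (r B : R) :
  (forall eps, 0 < eps < 1 -> (1 - eps) * r <= B) -> r <= B.
Proof.
move=> h; apply/ler_addgt0Pr => e e0.
have r_le := ler_norm r; have r_ge0 := normr_ge0 r.
have den : 0 < `|r| + e + 1 by lra.
set eps := e / (`|r| + e + 1).
have eps01 : 0 < eps < 1 by rewrite /eps divr_gt0 //= ltr_pdivrMr // mul1r; lra.
have eps_r : eps * r <= e.
  by rewrite /eps mulrAC ler_pdivrMr // ler_pM2l //; lra.
have := h eps eps01; rewrite mulrBl mul1r; lra.
Qed.

Variables (K : nat) (ps pd : 'I_K -> R).

Lemma achievable_scaled_le (B r eps : R) : achievable ps pd r ->
  (forall n M (c : Defs.code K M n), (0 < M)%N ->
      (1 - err_prob ps pd c) * log2 M%:R - 1 <= n%:R * B) ->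
  0 < eps < 1 -> (1 - eps) * r <= B.
Proof.
move=> ach hb /andP[e0 e1]; rewrite -subr_le0.
have [N hN] := ach eps e0.
apply: le0_of_natmul_le1 => N'; exists (maxn N N'); first exact: leq_maxr.
have [M [c [rateM errc]]] := hN _ (leq_maxl N N').
set n := maxn N N' in rateM errc *.
have l2 : 0 < ln (2 : R) := ln2_gt0 R.
have Mp : (0 : R) < M%:R by apply: lt_le_trans rateM; apply: powR_gt0.
have M0 : (0 < M)%N by rewrite -(ltr0n R).
have nr_le : n%:R * r <= log2 M%:R.
  by rewrite /log2 ler_pdivlMr // -ln_powR ler_ln ?posrE ?powR_gt0.
have L0 : 0 <= log2 (M%:R : R) by rewrite /log2 divr_ge0 ?ln_ge0 ?ler1n // ltW.
have : (1 - eps) * (n%:R * r) <= (1 - err_prob ps pd c) * log2 M%:R.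
  apply: (@le_trans _ _ ((1 - eps) * log2 M%:R)).
    by rewrite ler_wpM2l // subr_ge0 ltW.
  by rewrite ler_wpM2r // lerB.
have := hb n M c M0.
have -> : n%:R * ((1 - eps) * r - B) = (1 - eps) * (n%:R * r) - n%:R * B by ring.
lra.
Qed.

Lemma achievable0 : achievable ps pd 0.
Proof.
move=> eps ep; exists 0%N => n _.
exists 1%N, (Code (fun (_ : 'I_1) (_ : 'I_n) => false)
   (fun (_ : 'I_K) (_ : 'I_n) (_ : {ffun 'I_n -> bool}) => false)
   (fun _ => ord0)); split.
  by rewrite mulr0 powRr0.
rewrite /err_prob big1 ?mulr0 ?ltW // => w _.
rewrite big1 // => z _; rewrite big1 // => e _.
by rewrite /= (ord1 w) eqxx mulr0.
Qed.

End RateLimit.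

Theorem theorem1 (R : realType) (K : nat) (ps pd : 'I_K -> R)
  (hK : (1 <= K)%N)
  (hps : forall i, 0 <= ps i <= 2^-1)
  (hpd : forall i, 0 <= pd i <= 2^-1) :
  capacity ps pd <= Rub ps pd /\
  (forall rate : R, achievable ps pd rate -> rate <= Rub ps pd).
Proof.
have half_le1 : (2^-1 : R) <= 1 by rewrite invf_le1 ?ler1n.
have hps1 i : 0 <= ps i <= 1.
  by case/andP: (hps i) => -> /le_trans; apply.
have hpd1 i : 0 <= pd i <= 1.
  by case/andP: (hpd i) => -> /le_trans; apply.
have rate_le r : achievable ps pd r -> r <= Rub ps pd.
  move=> ach; rewrite /Rub le_min; apply/andP; split;
    apply: le_of_forall_scaled => eps eps01; apply: (achievable_scaled_le ach) => //.
  - by move=> n M c M0; apply: fano_source_cut.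
  - by move=> n M c M0; apply: fano_dest_cut.
split => //; apply: ge_sup; last by move=> r /rate_le.
by exists 0; apply: achievable0.
Qed.
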